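(* Let $t_{\mathrm m},t_{\mathrm b}\ge 1$, $t_{\mathrm{msg}}\ge 0$ and $t_{\mathrm{cut}}$ be integers with $t_{\mathrm{cut}}>\max\{t_{\mathrm m},t_{\mathrm b},t_{\mathrm{msg}}\}$, and let $p_{\mathrm m},p_{\mathrm b}\in(0,1)$. Let $M_1,M_2,M_b$ be independent random variables with $\mathbb P(M_1=j)=\mathbb P(M_2=j)=p_{\mathrm m}(1-p_{\mathrm m})^{j-1}$ and $\mathbb P(M_b=j)=p_{\mathrm b}(1-p_{\mathrm b})^{j-1}$ for $j\in\{1,2,\dots\}$, and put $X_1=t_{\mathrm m}M_1$, $X_2=t_{\mathrm m}M_2$, $X_b=t_{\mathrm b}M_b$, $X_{\max}=\max\{X_1,X_2,X_b\}$, $X_{\min}=\min\{X_1,X_2,X_b\}$. Let $Y=1$ if $X_{\max}-X_{\min}<t_{\mathrm{cut}}$ and $Y=0$ otherwise, let $p=\mathbb P(Y=1)$, and let $$Z=\begin{cases}X_{\max}+t_{\mathrm{msg}}, & Y=1,\\ X_{\min}+t_{\mathrm{cut}}, & Y=0.\end{cases}$$ Let $(Y^{(i)},Z^{(i)})_{i\ge1}$ be i.i.d. copies of $(Y,Z)$, let $N=\min\{i\ge1: Y^{(i)}=1\}$ and $X_{\mathrm{e2e}}=\sum_{i=1}^{N}Z^{(i)}$. For $i,j\in\{1,2,b\}$ define the events $A_i^+=\{X_{\max}=X_i,\ X_{\max}-X_{\min}<t_{\mathrm{cut}}\}$, $A_i^-=\{X_{\max}=X_i,\ X_{\max}-X_{\min}\ge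 t_{\mathrm{cut}}\}$, $A_{ij}^-=\{X_{\max}=X_i,\ X_{\min}=X_j,\ X_{\max}-X_{\min}\ge t_{\mathrm{cut}}\}$, and write juxtaposition of events for their intersection (e.g. $A_1^+A_2^+=A_1^+\cap A_2^+$, $A_{12}^-A_{1b}^-=A_{12}^-\cap A_{1b}^-$). Then $$\mathbb E(X_{\mathrm{e2e}})=\frac{\mathbb E(Z\mathbf 1_{Y=0})+\mathbb E(Z\mathbf 1_{Y=1})}{p},$$ where $$\mathbb E(Z\mathbf 1_{Y=1})=2\mathbb E(Z\mathbf 1_{A_1^+})+\mathbb E(Z\mathbf 1_{A_b^+})-\mathbb E(Z\mathbf 1_{A_1^+A_2^+})-2\mathbb E(Z\mathbf 1_{A_1^+A_b^+})+\mathbb E(Z\mathbf 1_{A_1^+A_2^+A_b^+}),$$ $$\mathbb E(Z\mathbf 1_{Y=0})=2\big(\mathbb E(Z\mathbf 1_{A_{12}^-})+\mathbb E(Z\mathbf 1_{A_{1b}^-})+\mathbb E(Z\mathbf 1_{A_{b1}^-})\big)-2\mathbb E(Z\mathbf 1_{A_{12}^-A_{1b}^-})-\mathbb E(Z\mathbf 1_{A_{b1}^-A_{b2}^-})-\mathbb E(Z\mathbf 1_{A_1^-A_2^-})-2\mathbb E(Z\mathbf 1_{A_1^-A_b^-}).$$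
   Context: This models end-to-end entanglement generation in a chain of three elementary links (two identical metropolitan links 1, 2 and a backbone link b) with a global cut-off: in each round, $X_1,X_2,X_b$ are the times at which the three elementary links are first generated; the round succeeds ($Y=1$) iff all three are generated within a window shorter than $t_{\mathrm{cut}}$; a successful round lasts $X_{\max}+t_{\mathrm{msg}}$ and a failed round lasts $X_{\min}+t_{\mathrm{cut}}$; rounds are repeated independently until the first success, and $X_{\mathrm{e2e}}$ is the total time until a successful end-to-end link. *)

From HB Require Import structures.
From mathcomp Require Import all_boot all_order all_algebra.
From mathcomp Require Import all_classical all_reals all_analysis.
Set Implicit Arguments. Unset Strict Implicit. Unset Printing Implicit Defensive.
Import Order.TTheory GRing.Theory Num.Theory.
Local Open Scope classical_set_scope.
Local Open Scope ring_scope.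

Inductive link := L1 | L2 | Lb.

Definition link_eqb (a b : link) : bool :=
  match a, b with L1, L1 | L2, L2 | Lb, Lb => true | _, _ => false end.
Lemma link_eqP : Equality.axiom link_eqb.
Proof. by case; case; constructor. Qed.
HB.instance Definition _ := hasDecEq.Build link link_eqP.

Definition mutually_independent {d} {T : measurableType d} {R : realType}
  (P : probability T R) {I : eqType} {V : Type} (X : I -> T -> V) : Prop :=
  forall (s : seq I) (B : I -> set V), uniq s ->
    P (\bigcap_(i in [set` s]) (X i @^-1` B i)) =
    (\prod_(i <- s) P (X i @^-1` B i))%E.

Definition Mof {T : Type} (M1 M2 Mb : T -> nat) (l : link) : T -> nat :=
  match l with L1 => M1 | L2 => M2 | Lb => Mb end.

Definition Xof {T : Type} (tm tb : nat) (M1 M2 Mb : T -> nat) (l : link) (x : T) : nat :=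
  match l with L1 => tm * M1 x | L2 => tm * M2 x | Lb => tb * Mb x end.

Definition Xmax {T : Type} (X : link -> T -> nat) (x : T) : nat :=
  maxn (X L1 x) (maxn (X L2 x) (X Lb x)).
Definition Xmin {T : Type} (X : link -> T -> nat) (x : T) : nat :=
  minn (X L1 x) (minn (X L2 x) (X Lb x)).

Definition Yof {T : Type} (tcut : nat) (X : link -> T -> nat) (x : T) : nat :=
  if (Xmax X x - Xmin X x < tcut)%N then 1%N else 0%N.

Definition Zof {T : Type} (tcut tmsg : nat) (X : link -> T -> nat) (x : T) : nat :=
  if Yof tcut X x == 1%N then (Xmax X x + tmsg)%N else (Xmin X x + tcut)%N.

Definition Aplus {T : Type} (tcut : nat) (X : link -> T -> nat) (i : link) : set T :=
  [set x | Xmax X x = X i x /\ (Xmax X x - Xmin X x < tcut)%N].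
Definition Aminus {T : Type} (tcut : nat) (X : link -> T -> nat) (i : link) : set T :=
  [set x | Xmax X x = X i x /\ (tcut <= Xmax X x - Xmin X x)%N].
Definition Aminus2 {T : Type} (tcut : nat) (X : link -> T -> nat) (i j : link) : set T :=
  [set x | Xmax X x = X i x /\ Xmin X x = X j x /\ (tcut <= Xmax X x - Xmin X x)%N].

Definition EZ {d} {T : measurableType d} {R : realType} (P : probability T R)
  (F : T -> nat) (A : set T) : \bar R :=
  (\int[P]_(x in A) ((F x)%:R : R)%:E)%E.

(* C i = (Y^(i+1), Z^(i+1)) (0-based indexing of the copies).
   X_e2e = sum_{i=1}^N Z^(i), written as the sum of all Z^(i) with
   i <= N, i.e. with Y^(k) = 0 for all k < i (this is +oo if N = oo). *)
Definition Xe2e {T : Type} {R : realType} (C : nat -> T -> nat * nat) (x : T) : \bar R :=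
  (\sum_(0 <= i <oo)
     (if all (fun k => (C k x).1 == 0%N) (iota 0 i)
      then (((C i x).2)%:R : R) else 0)%:E)%E.

From HB Require Import structures.
From mathcomp Require Import all_boot all_order all_algebra.
From mathcomp Require Import all_classical all_reals all_analysis.
From mathcomp Require Import measurable_realfun zify ring lra.
Import Order.TTheory GRing.Theory Num.Theory.
Local Open Scope classical_set_scope.
Local Open Scope ring_scope.

(* Each round is an independent copy of (Y, Z), so the probability that rounds
   1, ..., i fail and round i + 1 lasts z is (1 - p)^i P(Z = z); summing over i
   and z gives the Wald identity E(X_e2e) = E(Z) / p.
   The two expansions of E(Z 1_{Y = y}) are integrated pointwise identities between
   the numbers of events containing the outcome (M_1, M_2, M_b): inclusion-exclusion
   over the links attaining the maximum when Y = 1, and a count of the pairs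
   (maximal link, minimal link) when Y = 0. As M_1, M_2 are i.i.d. and independent
   of M_b, swapping them preserves the law of the triple, which merges the terms
   that are symmetric in links 1 and 2. All terms are finite because
   Z <= X_1 + t_cut + t_msg and geometric variables have finite mean, so the
   identities can be rearranged in R. *)

Section discrete_integrals.
Context {d : measure_display} {T : measurableType d} {R : realType}.
Variable mu : {measure set T -> \bar R}.
Local Open Scope ereal_scope.

Lemma measurable_preimage_countable {K : countType} {U : T -> K} :
  (forall v, measurable (U @^-1` [set v])) -> forall B, measurable (U @^-1` B).
Proof.
move=> mU B; rewrite (_ : U @^-1` B = \bigcup_(v in B) U @^-1` [set v]); last first.
  by apply/seteqP; split => [x Bx|x [v Bv /= ->]] //; exists (U x).
rewrite bigcup_mkcond; apply: countable_bigcupT_measurable; first exact: countableP.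
by move=> v; case: ifP.
Qed.

Lemma measurable_fun_countable (K : countType) (U : T -> K) (h : K -> \bar R) D :
  (forall v, measurable (U @^-1` [set v])) -> measurable_fun D (h \o U).
Proof.
move=> mU mD B _; apply: measurableI => //; rewrite comp_preimage.
exact: measurable_preimage_countable.
Qed.

Lemma ge0_integral_fibers (U : T -> nat) D (f : T -> \bar R) :
  (forall k, measurable (U @^-1` [set k])) -> measurable D ->
  measurable_fun D f -> (forall x, D x -> 0 <= f x) ->
  \int[mu]_(x in D) f x = \sum_(k <oo) \int[mu]_(x in D `&` U @^-1` [set k]) f x.
Proof.
move=> mU mD mf f0.
have DE : D = \bigcup_k (D `&` U @^-1` [set k]).
  by apply/seteqP; split => [x Dx|x [k _ []//]]; exists (U x).
rewrite {1}DE; apply: ge0_integral_bigcup; rewrite -?DE //.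
- by move=> k; apply: measurableI.
- by move=> i j _ _ [x [[_ /= <-] [_ /= ->]]].
Qed.

Lemma ge0_integral_nat (U : T -> nat) D :
  (forall k, measurable (U @^-1` [set k])) -> measurable D ->
  \int[mu]_(x in D) (U x)%:R%:E = \sum_(k <oo) k%:R%:E * mu (D `&` U @^-1` [set k]).
Proof.
move=> mU mD; rewrite (ge0_integral_fibers _ _ _ mU mD); last 2 first.
- exact: (@measurable_fun_countable _ U (fun k => k%:R%:E)).
- by move=> x _; rewrite lee_fin.
apply: eq_eseriesr => k _; rewrite -integral_cst; last exact: measurableI.
by apply: eq_integral => x; rewrite inE => -[_ /= ->].
Qed.

(* Both integrals are series indexed by the codes [pickle v] of the values. *)
Lemma ge0_integral_eq_law (K : countType) (U V : T -> K) (h : K -> \bar R) :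
  (forall v, measurable (U @^-1` [set v])) ->
  (forall v, measurable (V @^-1` [set v])) ->
  (forall v, mu (U @^-1` [set v]) = mu (V @^-1` [set v])) ->
  (forall v, 0 <= h v) ->
  \int[mu]_x h (U x) = \int[mu]_x h (V x).
Proof.
move=> mU mV UV h0.
have series (W : T -> K) : (forall v, measurable (W @^-1` [set v])) ->
    \int[mu]_x h (W x) =
    \sum_(n <oo) oapp (fun v => h v * mu (W @^-1` [set v])) 0 (pickle_inv n).
  move=> mW; have mWp n : measurable ((pickle \o W) @^-1` [set n]).
    by rewrite comp_preimage; exact: measurable_preimage_countable.
  rewrite (ge0_integral_fibers _ _ _ mWp measurableT); last 2 first.
  - exact: measurable_fun_countable.
  - by move=> x _; exact: h0.
  apply: eq_eseriesr => n _; case En: pickle_inv => [v|] /=.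
    have pv : pickle v = n by have := @pickle_invK K n; rewrite En.
    rewrite (_ : _ `&` _ = W @^-1` [set v]); last first.
      rewrite setTI; apply/seteqP; split => x /=; last by move=> ->.
      by rewrite -pv => /(pcan_inj pickleK_inv).
    rewrite -integral_cst //.
    by apply: eq_integral => x; rewrite inE => /= ->.
  rewrite (_ : _ `&` _ = set0) ?integral_set0 //.
  by apply/seteqP; split => x //= [_ Wn]; move: En; rewrite -Wn pickleK_inv.
rewrite !series //; apply: eq_eseriesr => n _.
by case: pickle_inv => //= v; rewrite UV.
Qed.

End discrete_integrals.

Section events_of_discrete_variables.
Context {d : measure_display} {T : measurableType d} {R : realType} (P : probability T R).
Local Open Scope ereal_scope.

Lemma EZ_preimage (K : Type) (U : T -> K) (F : K -> nat) B :
  EZ P (fun x => F (U x)) (U @^-1` B) = \int[P]_x ((U x \in B) * F (U x))%:R%:E.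
Proof.
rewrite /EZ integral_mkcond; apply: eq_integral => x _; rewrite /patch.
rewrite (_ : x \in _ = (U x \in B)); last by apply/idP/idP; rewrite !in_setE.
by case: (U x \in B); rewrite ?mul1n ?mul0n.
Qed.

Lemma eq_sum_EZ_preimage (K : Type) (U : T -> K) (F : K -> nat) (s1 s2 : seq (set K)) :
  (forall B, measurable (U @^-1` B)) ->
  (forall t, \sum_(B <- s1) (t \in B) = \sum_(B <- s2) (t \in B))%N ->
  \sum_(B <- s1) EZ P (fun x => F (U x)) (U @^-1` B) =
  \sum_(B <- s2) EZ P (fun x => F (U x)) (U @^-1` B).
Proof.
move=> mU s12.
have mF (G : K -> nat) : measurable_fun setT (fun x => (G (U x))%:R%:E : \bar R).
  by move=> _ Y _; rewrite setTI; exact: (mU ((fun k => (G k)%:R%:E) @^-1` Y)).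
have sumE s : \sum_(B <- s) EZ P (fun x => F (U x)) (U @^-1` B) =
    \int[P]_x ((\sum_(B <- s) (U x \in B)) * F (U x))%:R%:E.
  elim: s => [|B s IH].
    by rewrite big_nil; apply/esym/integral0_eq => x _; rewrite big_nil.
  rewrite big_cons IH EZ_preimage -ge0_integralD //; last 2 first.
  - exact: (mF (fun t => (t \in B) * F t)%N).
  - exact: (mF (fun t => (\sum_(B <- s) (t \in B)) * F t)%N).
  by apply: eq_integral => x _; rewrite big_cons mulnDl natrD EFinD.
by rewrite !sumE; apply: eq_integral => x _; rewrite s12.
Qed.

Lemma prob_fibers_eq (U V : T -> nat) :
  (forall k, measurable (U @^-1` [set k])) -> (forall k, measurable (V @^-1` [set k])) ->
  (forall k, (0 < k)%N -> P (U @^-1` [set k]) = P (V @^-1` [set k])) ->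
  forall k, P (U @^-1` [set k]) = P (V @^-1` [set k]).
Proof.
have fibers_sum1 (W : T -> nat) : (forall k, measurable (W @^-1` [set k])) ->
    \sum_(k <oo) P (W @^-1` [set k]) = 1.
  move=> mW; rewrite -(probability_setT P).
  rewrite (_ : [set: T] = \bigcup_k W @^-1` [set k]); last first.
    by apply/seteqP; split => x // _; exists (W x).
  rewrite measure_bigcup //; last by move=> i j _ _ [x [/= <- <-]].
  by apply: eq_eseriesl => k; rewrite in_setT.
move=> mU mV UV [|k]; last exact: UV.
have := fibers_sum1 U mU; have := fibers_sum1 V mV.
rewrite (@nneseriesD1 _ _ 0%N) // => VS; rewrite (@nneseriesD1 _ _ 0%N) // => US.
set S := \sum_(0 <= k <oo | _) _ in US.
rewrite (eq_eseriesr (g := fun k => P (U @^-1` [set k]))) -/S in VS; last first.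
  by move=> k /= k0; rewrite UV // lt0n.
have S_fin : S \is a fin_num.
  rewrite ge0_fin_numE ?nneseries_ge0 // (@le_lt_trans _ _ 1) ?ltry //.
  by rewrite -US leeDr.
rewrite -(addeK (P (U @^-1` [set 0%N])) S_fin) US.
by rewrite -(addeK (P (V @^-1` [set 0%N])) S_fin) VS.
Qed.

End events_of_discrete_variables.

Section geometric_law.
Context {R : realType}.

Lemma sum_nat_mul_exprE (q : R) n :
  (1 - q) ^+ 2 * \sum_(0 <= k < n.+1) k%:R * q ^+ k.-1 =
  1 - n.+1%:R * q ^+ n + n%:R * q ^+ n.+1.
Proof.
elim: n => [|n IH]; first by rewrite big_nat1; ring.
by rewrite big_nat_recr //= mulrDr IH !exprS -!natr1; ring.
Qed.

Lemma geometric_partial_mean_le (r : R) n : 0 < r < 1 ->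
  \sum_(0 <= k < n) k%:R * (r * (1 - r) ^+ k.-1) <= r^-1.
Proof.
move=> /andP[r0 r1].
rewrite (eq_bigr (fun k => r * (k%:R * (1 - r) ^+ k.-1))); last first.
  by move=> k _; rewrite mulrCA.
rewrite -mulr_sumr -(ler_pM2l r0) mulfV ?gt_eqF // mulrA -expr2.
case: n => [|n]; first by rewrite big_geq // mulr0 ler01.
have := sum_nat_mul_exprE (1 - r) n; rewrite (_ : 1 - (1 - r) = r) => [->|]; last by ring.
have q0 : 0 <= (1 - r) ^+ n by apply: exprn_ge0; lra.
have nrq0 : 0 <= n%:R * r * (1 - r) ^+ n by rewrite !mulr_ge0 //; lra.
rewrite exprS -natr1; nra.
Qed.

Lemma eseries_geometric (q : R) : 0 <= q < 1 ->
  (\sum_(i <oo) (q ^+ i)%:E = ((1 - q)^-1)%:E)%E.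
Proof.
move=> /andP[q0 q1]; apply: cvg_lim => //.
rewrite (_ : (fun n => _) = (fun n => (series (geometric 1 q) n)%:E)); last first.
  apply/funext => n; rewrite sumEFin /series /=; congr (_%:E).
  by apply: eq_bigr => i _; rewrite mul1r.
apply: cvg_EFin; first exact: nearW.
by rewrite -[X in _ --> X]mul1r; apply: cvg_geometric_series; rewrite ger0_norm.
Qed.

Context {d : measure_display} {T : measurableType d} (P : probability T R).
Local Open Scope ereal_scope.

Lemma geometric_mean_fin (U : T -> nat) (r : R) :
  (forall k, measurable (U @^-1` [set k])) -> (0 < r < 1)%R ->
  (forall j, (0 < j)%N -> P (U @^-1` [set j]) = (r * (1 - r) ^+ j.-1)%:E) ->
  \int[P]_x (U x)%:R%:E < +oo.
Proof.
move=> mU r01 Ulaw; rewrite (ge0_integral_nat P _ _ mU measurableT).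
rewrite (eq_eseriesr (g := fun k => (k%:R * (r * (1 - r) ^+ k.-1))%:E)); last first.
  move=> [|k] _; rewrite setTI ?mul0r ?mul0e // EFinM; congr (_ * _); exact: Ulaw.
have r_ge0 : (0 <= r)%R by case/andP: r01 => /ltW.
have r_le1 : (0 <= 1 - r)%R by case/andP: r01 => _ /ltW; rewrite subr_ge0.
apply: (@le_lt_trans _ _ (r^-1)%:E); last exact: ltry.
apply: lime_le.
  by apply: is_cvg_nneseries => n _ _; rewrite lee_fin mulr_ge0 ?mulr_ge0 ?exprn_ge0.
by apply: nearW => n; rewrite sumEFin lee_fin geometric_partial_mean_le.
Qed.

End geometric_law.

Definition first_rounds_fail {T : Type} (C : nat -> T -> nat * nat) (i : nat) : set T :=
  [set x | all (fun k => (C k x).1 == 0%N) (iota 0 i)].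

Section geometric_number_of_rounds.
Context {d : measure_display} {T : measurableType d} {R : realType} (P : probability T R).
Variables (C : nat -> T -> nat * nat) (W : T -> nat * nat) (p : R).
Hypothesis C_measurable : forall i v, measurable (C i @^-1` [set v]).
Hypothesis C_indep : mutually_independent P C.
Hypothesis C_law : forall i B, P (C i @^-1` B) = P (W @^-1` B).
Hypothesis W_measurable : forall v, measurable (W @^-1` [set v]).
Hypothesis W_failure : P (W @^-1` [set v | v.1 = 0%N]) = (1 - p)%:E.
Hypothesis p_gt0 : 0 < p.
Hypothesis W2_mean_fin : (\int[P]_x ((W x).2)%:R%:E < +oo)%E.
Local Open Scope ereal_scope.

Let measurable_C i B : measurable (C i @^-1` B).
Proof. exact: measurable_preimage_countable. Qed.

Lemma measurable_first_rounds_fail i : measurable (first_rounds_fail C i).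
Proof.
elim: i => [|i IH].
  by rewrite (_ : first_rounds_fail C 0 = setT) //; apply/seteqP; split.
rewrite (_ : first_rounds_fail C i.+1 =
  first_rounds_fail C i `&` C i @^-1` [set v | v.1 = 0%N]).
  exact: measurableI.
apply/seteqP; rewrite /first_rounds_fail -[i.+1]addn1 iotaD.
split => x /=; rewrite all_cat /= andbT.
  by move=> /andP[-> /eqP].
by move=> [-> /= ->].
Qed.

Lemma prob_first_rounds_fail_then i z :
  P (first_rounds_fail C i `&` (fun x => (C i x).2) @^-1` [set z]) =
  ((1 - p) ^+ i)%:E * P (W @^-1` [set v | v.2 = z]).
Proof.
pose B k : set (nat * nat) :=
  if (k < i)%N then [set v | v.1 = 0%N] else [set v | v.2 = z].
have := C_indep (iota 0 i.+1) B (iota_uniq 0 i.+1).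
rewrite (_ : \bigcap_(k in _) _ =
  first_rounds_fail C i `&` (fun x => (C i x).2) @^-1` [set z]).
  rewrite -[i.+1]addn1 iotaD big_cat big_seq1 add0n [B i]/B ltnn C_law => ->.
  congr (_ * _).
  rewrite (eq_big_seq (fun=> (1 - p)%:E)) => [|k]; last first.
    by rewrite mem_iota => /andP[_ ki]; rewrite /B ki C_law W_failure.
  by rewrite prodEFin big_const_seq count_predT size_iota iter_mulr_1.
apply/seteqP; split => [x Cx|x [/allP fail_x Cix] k].
  have {}Cx k : (k <= i)%N -> B k (C k x).
    by move=> ki; apply: Cx; change (k \in iota 0 i.+1); rewrite mem_iota add0n leq0n ltnS.
  split; last by have := Cx i (leqnn i); rewrite /B ltnn.
  apply/allP => k; rewrite mem_iota => /= ki; apply/eqP.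
  by have := Cx k (ltnW ki); rewrite /B ki.
change (k \in iota 0 i.+1 -> B k (C k x)); rewrite mem_iota add0n leq0n ltnS /= /B.
case: ltnP => [ki _|ik ki]; first by apply/eqP/fail_x; rewrite mem_iota add0n leq0n.
by have -> : k = i by apply/eqP; rewrite eqn_leq ki ik.
Qed.

Let round_term_restrict i :
  (fun x => (if all (fun k => (C k x).1 == 0%N) (iota 0 i)
             then (((C i x).2)%:R : R) else 0%R)%:E) =
  (fun x => ((C i x).2)%:R%:E) \_ (first_rounds_fail C i).
Proof.
apply/funext => x; rewrite /patch; case: ifPn => xA; first by rewrite mem_set.
by rewrite memNset //; exact/negP.
Qed.

Lemma integral_round_if_reached i :
  \int[P]_x (if all (fun k => (C k x).1 == 0%N) (iota 0 i)
             then (((C i x).2)%:R : R) else 0%R)%:E =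
  ((1 - p) ^+ i)%:E * \int[P]_x ((W x).2)%:R%:E.
Proof.
have mCi2 z : measurable ((fun x => (C i x).2) @^-1` [set z]).
  exact: (measurable_C i [set v | v.2 = z]).
have mW2 z : measurable ((fun x => (W x).2) @^-1` [set z]).
  exact: (measurable_preimage_countable W_measurable [set v | v.2 = z]).
rewrite round_term_restrict -integral_mkcond.
rewrite (ge0_integral_nat P _ _ mCi2 (measurable_first_rounds_fail i)).
rewrite (ge0_integral_nat P _ _ mW2 measurableT) -nneseriesZl; last first.
  by move=> z _; rewrite mule_ge0.
apply: eq_eseriesr => z _; rewrite setTI muleCA; congr (_ * _).
exact: prob_first_rounds_fail_then.
Qed.

Lemma Xe2e_mean : \int[P]_x Xe2e C x = \int[P]_x ((W x).2)%:R%:E * (p^-1)%:E.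
Proof.
have p_le1 : (p <= 1)%R.
  by rewrite -subr_ge0 -lee_fin -W_failure measure_ge0.
rewrite integral_nneseries //; last 2 first.
- move=> n; rewrite round_term_restrict.
  apply/(measurable_restrictT _ (measurable_first_rounds_fail n)) => mD B _.
  by apply: measurableI => //; exact: (measurable_C n ((fun v => v.2%:R%:E) @^-1` B)).
- by move=> n x _; case: ifP; rewrite lee_fin.
under eq_eseriesr do rewrite integral_round_if_reached.
have e_fin : \int[P]_x ((W x).2)%:R%:E \is a fin_num.
  by rewrite ge0_fin_numE // integral_ge0 // => x _; rewrite lee_fin.
rewrite -(fineK e_fin); under eq_eseriesr do rewrite muleC.
rewrite nneseriesZl; last by move=> i _; rewrite lee_fin exprn_ge0 // subr_ge0.
by rewrite eseries_geometric ?subKr // subr_ge0 p_le1 /= gtrBl.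
Qed.

End geometric_number_of_rounds.

Section link_events.
Context {K : Type} (tcut : nat) (X : link -> K -> nat).
Local Notation Ap := (Aplus tcut X).
Local Notation Am := (Aminus tcut X).
Local Notation Am2 := (Aminus2 tcut X).

Lemma in_Aplus i t :
  (t \in Ap i) = (X i t == Xmax X t) && (Xmax X t - Xmin X t < tcut)%N.
Proof.
apply/idP/idP; rewrite in_setE /Aplus /=.
  by move=> [-> ->]; rewrite eqxx.
by move=> /andP[/eqP -> ->].
Qed.

Lemma in_Aminus i t :
  (t \in Am i) = (X i t == Xmax X t) && ~~ (Xmax X t - Xmin X t < tcut)%N.
Proof.
apply/idP/idP; rewrite in_setE /Aminus /= -leqNgt.
  by move=> [-> ->]; rewrite eqxx.
by move=> /andP[/eqP -> ->].
Qed.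

Lemma in_Aminus2 i j t : (t \in Am2 i j) =
  [&& X i t == Xmax X t, X j t == Xmin X t & ~~ (Xmax X t - Xmin X t < tcut)%N].
Proof.
apply/idP/idP; rewrite in_setE /Aminus2 /= -leqNgt.
  by move=> [-> [-> ->]]; rewrite !eqxx.
by move=> /and3P[/eqP -> /eqP -> ->].
Qed.

Lemma in_Yof_eq1 t :
  (t \in [set t | Yof tcut X t = 1%N]) = (Xmax X t - Xmin X t < tcut)%N.
Proof. by apply/idP/idP; rewrite in_setE /Yof /=; case: ifP. Qed.

Lemma in_Yof_eq0 t :
  (t \in [set t | Yof tcut X t = 0%N]) = ~~ (Xmax X t - Xmin X t < tcut)%N.
Proof. by apply/idP/idP; rewrite in_setE /Yof /=; case: ifP. Qed.

Lemma Xmax_attained t : [|| X L1 t == Xmax X t, X L2 t == Xmax X t | X Lb t == Xmax X t].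
Proof. rewrite /Xmax; lia. Qed.

Lemma Xmin_attained t : [|| X L1 t == Xmin X t, X L2 t == Xmin X t | X Lb t == Xmin X t].
Proof. rewrite /Xmin; lia. Qed.

Lemma Zof_le tmsg i t : (Zof tcut tmsg X t <= X i t + tcut + tmsg)%N.
Proof.
have : (Xmin X t <= X i t <= Xmax X t)%N by rewrite /Xmin /Xmax; case: i; lia.
by rewrite /Zof /Yof; case: ltnP => /=; lia.
Qed.

Lemma Yof_indicator_count t :
  (\sum_(B <- [:: [set t | Yof tcut X t = 0%N]; [set t | Yof tcut X t = 1%N]]) (t \in B) =
   \sum_(B <- [:: setT]) (t \in B))%N.
Proof. by rewrite !big_cons !big_nil in_Yof_eq0 in_Yof_eq1 in_setT; case: ltnP. Qed.

(* [Y = 1] is the union of A_1^+, A_2^+, A_b^+ since the maximum is attained. *)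
Lemma Aplus_indicator_count t :
  (\sum_(B <- [:: [set t | Yof tcut X t = 1%N]; Ap L1 `&` Ap L2; Ap L1 `&` Ap Lb;
                Ap L2 `&` Ap Lb]) (t \in B) =
   \sum_(B <- [:: Ap L1; Ap L2; Ap Lb; Ap L1 `&` Ap L2 `&` Ap Lb]) (t \in B))%N.
Proof.
rewrite !big_cons !big_nil (in_setI t (Ap L1 `&` Ap L2)) !(in_setI t (Ap _)).
rewrite !in_Aplus in_Yof_eq1.
have := Xmax_attained t.
case: (X L1 t == _) (X L2 t == _) (X Lb t == _) (_ < tcut)%N => [] [] [] [] //=.
Qed.

(* On [Y = 0] the sets S, S' of links attaining the maximum and the minimum are
   disjoint, so the ordered pairs (i, j) with i in S and j in S' number
   |S| |S'| = 1 + [|S'| = 2] + [|S| = 2]. *)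
Lemma Aminus_indicator_count (tcut_gt0 : (0 < tcut)%N) t :
  (\sum_(B <- [:: [set t | Yof tcut X t = 0%N];
                Am2 L1 L2 `&` Am2 L1 Lb; Am2 L2 L1 `&` Am2 L2 Lb; Am2 Lb L1 `&` Am2 Lb L2;
                Am L1 `&` Am L2; Am L1 `&` Am Lb; Am L2 `&` Am Lb]) (t \in B) =
   \sum_(B <- [:: Am2 L1 L2; Am2 L1 Lb; Am2 Lb L1; Am2 L2 L1; Am2 L2 Lb; Am2 Lb L2])
     (t \in B))%N.
Proof.
have max_neq_min i : ~~ (Xmax X t - Xmin X t < tcut)%N ->
    ~~ ((X i t == Xmax X t) && (X i t == Xmin X t)).
  by move: (X i t) (Xmax X t) (Xmin X t); lia.
rewrite !big_cons !big_nil !(in_setI t (Am2 _ _)) !(in_setI t (Am _)).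
rewrite !in_Aminus2 !in_Aminus in_Yof_eq0.
move: (Xmax_attained t) (Xmin_attained t).
move: (max_neq_min L1) (max_neq_min L2) (max_neq_min Lb).
by case: (X L1 t == Xmax X t) (X L2 t == Xmax X t) (X Lb t == Xmax X t)
  (X L1 t == Xmin X t) (X L2 t == Xmin X t) (X Lb t == Xmin X t) (_ < tcut)%N
  => [] [] [] [] [] [] [] //= *; lia.
Qed.

End link_events.

Definition link_swap12 (i : link) : link :=
  match i with L1 => L2 | L2 => L1 | Lb => Lb end.

Section link_swap.
Context {K : Type} (tcut tmsg : nat) {X : link -> K -> nat} {sigma : K -> K}.
Hypothesis X_sigma : forall i t, X i (sigma t) = X (link_swap12 i) t.

Lemma Xmax_swap t : Xmax X (sigma t) = Xmax X t.
Proof. rewrite /Xmax !X_sigma /=; lia. Qed.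

Lemma Xmin_swap t : Xmin X (sigma t) = Xmin X t.
Proof. rewrite /Xmin !X_sigma /=; lia. Qed.

Lemma Zof_swap t : Zof tcut tmsg X (sigma t) = Zof tcut tmsg X t.
Proof. by rewrite /Zof /Yof Xmax_swap Xmin_swap. Qed.

Lemma preimage_Aplus_swap i : sigma @^-1` Aplus tcut X i = Aplus tcut X (link_swap12 i).
Proof. by apply/seteqP; split => t; rewrite /Aplus /= Xmax_swap Xmin_swap X_sigma. Qed.

Lemma preimage_Aminus_swap i : sigma @^-1` Aminus tcut X i = Aminus tcut X (link_swap12 i).
Proof. by apply/seteqP; split => t; rewrite /Aminus /= Xmax_swap Xmin_swap X_sigma. Qed.

Lemma preimage_Aminus2_swap i j :
  sigma @^-1` Aminus2 tcut X i j = Aminus2 tcut X (link_swap12 i) (link_swap12 j).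
Proof. by apply/seteqP; split => t; rewrite /Aminus2 /= Xmax_swap Xmin_swap !X_sigma. Qed.

End link_swap.

Definition swap12 (t : nat * nat * nat) : nat * nat * nat := (t.1.2, t.1.1, t.2).

Definition Xtriple (tm tb : nat) : link -> nat * nat * nat -> nat :=
  Xof tm tb (fun t => t.1.1) (fun t => t.1.2) (fun t => t.2).

Lemma Xtriple_swap12 tm tb i t :
  Xtriple tm tb i (swap12 t) = Xtriple tm tb (link_swap12 i) t.
Proof. by case: i. Qed.

Section three_links.
Context {d : measure_display} {T : measurableType d} {R : realType} (P : probability T R).
Variables (tm tb tmsg tcut : nat) (M1 M2 Mb : T -> nat).
Hypothesis M_measurable : forall l v, measurable (Mof M1 M2 Mb l @^-1` [set v]).
Hypothesis M_indep : mutually_independent P (Mof M1 M2 Mb).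

Definition attempts (x : T) : nat * nat * nat := (M1 x, M2 x, Mb x).

Local Notation X := (Xtriple tm tb).
Local Notation Z := (Zof tcut tmsg X).
Local Notation E B := (EZ P (fun x => Z (attempts x)) (attempts @^-1` B)).
Local Notation Ap := (Aplus tcut X).
Local Notation Am := (Aminus tcut X).
Local Notation Am2 := (Aminus2 tcut X).
Local Open Scope ereal_scope.

Lemma attempts_fiber a b c :
  attempts @^-1` [set (a, b, c)] =
  M1 @^-1` [set a] `&` M2 @^-1` [set b] `&` Mb @^-1` [set c].
Proof. by apply/seteqP; split => x /=; [case=> <- <- <-|case=> [[<- <-] <-]]. Qed.

Lemma measurable_attempts B : measurable (attempts @^-1` B).
Proof.
apply: measurable_preimage_countable => -[[a b] c]; rewrite attempts_fiber.
by apply: measurableI; [apply: measurableI|];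
  [exact: (M_measurable L1)|exact: (M_measurable L2)|exact: (M_measurable Lb)].
Qed.

Lemma prob_attempts a b c : P (attempts @^-1` [set (a, b, c)]) =
  P (M1 @^-1` [set a]) * P (M2 @^-1` [set b]) * P (Mb @^-1` [set c]).
Proof.
have := M_indep [:: L1; L2; Lb]
  (fun l => [set (match l with L1 => a | L2 => b | Lb => c end)]) isT.
rewrite !big_cons big_nil mule1 muleA attempts_fiber => <-; congr (P _).
apply/seteqP; split => x /=; first by move=> [[? ?] ?] [] _.
by move=> H; split; [split|]; [exact: (H L1)|exact: (H L2)|exact: (H Lb)].
Qed.

Lemma prob_failureE : P (attempts @^-1` [set t | Yof tcut X t = 0%N]) =
  (1 - fine (P (attempts @^-1` [set t | Yof tcut X t = 1%N])))%R%:E.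
Proof.
rewrite (_ : _ @^-1` _ = ~` (attempts @^-1` [set t | Yof tcut X t = 1%N])); last first.
  by apply/seteqP; split => x /=; rewrite /Yof; case: ifP.
have Y1_fin : P (attempts @^-1` [set t | Yof tcut X t = 1%N]) \is a fin_num.
  exact: fin_num_measure (measurable_attempts _).
rewrite probability_setC; last exact: measurable_attempts.
by rewrite -[in LHS](fineK Y1_fin).
Qed.

Lemma success_prob_gt0 : (tm < tcut)%N -> (tb < tcut)%N ->
  0 < P (M1 @^-1` [set 1%N]) -> 0 < P (M2 @^-1` [set 1%N]) ->
  0 < P (Mb @^-1` [set 1%N]) ->
  (0 < fine (P (attempts @^-1` [set t | Yof tcut X t = 1%N])))%R.
Proof.
move=> tm_lt tb_lt M1_1 M2_1 Mb_1.
have all_one_success : attempts @^-1` [set (1, 1, 1)%N] `<=`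
    attempts @^-1` [set t | Yof tcut X t = 1%N].
  move=> x /= ->; rewrite /Yof ifT // /Xmax /Xmin /=; lia.
have le_success : P (M1 @^-1` [set 1%N]) * P (M2 @^-1` [set 1%N]) * P (Mb @^-1` [set 1%N])
    <= P (attempts @^-1` [set t | Yof tcut X t = 1%N]).
  rewrite -prob_attempts.
  exact: le_measure (mem_set (measurable_attempts _)) (mem_set (measurable_attempts _))
    all_one_success.
apply: fine_gt0; rewrite (lt_le_trans _ le_success) ?mule_gt0 //=.
by rewrite (le_lt_trans (probability_le1 P (measurable_attempts _))) ?ltry.
Qed.

Hypothesis M1_M2_law : forall v, P (M1 @^-1` [set v]) = P (M2 @^-1` [set v]).

Lemma EZ_swap12 B : E (swap12 @^-1` B) = E B.
Proof.
pose h t : \bar R := ((t \in B) * Z t)%:R%:E.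
have mU v : measurable ((swap12 \o attempts) @^-1` [set v]).
  by rewrite comp_preimage; exact: measurable_attempts.
have same_law v : P ((swap12 \o attempts) @^-1` [set v]) = P (attempts @^-1` [set v]).
  case: v => [[a b] c].
  rewrite (_ : _ @^-1` _ = attempts @^-1` [set (b, a, c)]); last first.
    by apply/seteqP; split => x /=; case=> <- <- <-.
  by rewrite !prob_attempts (M1_M2_law a) (M1_M2_law b) (muleC (P (M2 @^-1` [set a]))).
have h_ge0 t : 0 <= h t by rewrite lee_fin.
have := ge0_integral_eq_law P _ _ _ h mU (fun v => measurable_attempts _) same_law h_ge0.
rewrite !EZ_preimage => <-; apply: eq_integral => x _.
by rewrite /h /= (Zof_swap tcut tmsg (Xtriple_swap12 tm tb)).
Qed.

Hypothesis M1_mean_fin : \int[P]_x (M1 x)%:R%:E < +oo.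

Let measurable_M1 k : measurable (M1 @^-1` [set k]) := M_measurable L1 k.

Let measurable_Z : measurable_fun setT (fun x => (Z (attempts x))%:R%:E : \bar R).
Proof.
exact: (measurable_fun_countable _ attempts (fun t => (Z t)%:R%:E) _
          (fun v => measurable_attempts _)).
Qed.

Lemma Z_mean_fin : \int[P]_x (Z (attempts x))%:R%:E < +oo.
Proof.
pose c := (tcut + tmsg)%N.
apply: (@le_lt_trans _ _ (\int[P]_x ((tm * M1 x + c)%:R%:E))).
  apply: ge0_le_integral => //.
  - exact: (measurable_fun_countable _ M1 (fun k => (tm * k + c)%:R%:E) _ measurable_M1).
  - by move=> x _; rewrite lee_fin ler_nat addnA (Zof_le tcut X tmsg L1 (attempts x)).
rewrite (eq_integral (fun x => tm%:R%:E * (M1 x)%:R%:E + c%:R%:E)); last first.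
  by move=> x _; rewrite natrD natrM.
rewrite ge0_integralD //; last first.
  exact: (measurable_fun_countable _ M1 (fun k => tm%:R%:E * k%:R%:E) _ measurable_M1).
rewrite ge0_integralZl_EFin //; last first.
  exact: (measurable_fun_countable _ M1 (fun k => k%:R%:E) _ measurable_M1).
rewrite integral_cst // lte_add_pinfty ?lte_mul_pinfty //.
exact: le_lt_trans (probability_le1 P measurableT) (ltry 1).
Qed.

Lemma EZ_attempts_fin B : E B \is a fin_num.
Proof.
have Z_ge0 x : 0 <= (Z (attempts x))%:R%:E by rewrite lee_fin.
rewrite ge0_fin_numE; last exact: integral_ge0.
apply: le_lt_trans Z_mean_fin.
by apply: ge0_subset_integral => //; exact: measurable_attempts.
Qed.

Let EZr B := fine (E B).

Let EZ_EFin B : E B = (EZr B)%:E.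
Proof. by rewrite fineK ?EZ_attempts_fin. Qed.

Let EZ_swap12_eq B B' : swap12 @^-1` B = B' -> E B' = E B.
Proof. by move=> <-; exact: EZ_swap12. Qed.

Let X_swap12 := Xtriple_swap12 tm tb.

Lemma EZ_success_incl_excl :
  E [set t | Yof tcut X t = 1%N] =
  2%:E * E (Ap L1) + E (Ap Lb) - E (Ap L1 `&` Ap L2)
    - 2%:E * E (Ap L1 `&` Ap Lb) + E (Ap L1 `&` Ap L2 `&` Ap Lb).
Proof.
have := eq_sum_EZ_preimage P _ attempts Z _ _ measurable_attempts
  (Aplus_indicator_count tcut X).
rewrite !big_cons !big_nil !adde0.
rewrite (EZ_swap12_eq (Ap L1) (Ap L2)); last exact: preimage_Aplus_swap.
rewrite (EZ_swap12_eq (Ap L1 `&` Ap Lb) (Ap L2 `&` Ap Lb)); last first.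
  by rewrite preimage_setI !(preimage_Aplus_swap _ X_swap12).
rewrite !EZ_EFin -!(EFinD, EFinB, EFinM) => sum_eq.
by congr EFin; have := EFin_inj sum_eq; lra.
Qed.

Lemma EZ_failure_incl_excl : (0 < tcut)%N ->
  E [set t | Yof tcut X t = 0%N] =
  2%:E * (E (Am2 L1 L2) + E (Am2 L1 Lb) + E (Am2 Lb L1))
    - 2%:E * E (Am2 L1 L2 `&` Am2 L1 Lb) - E (Am2 Lb L1 `&` Am2 Lb L2)
    - E (Am L1 `&` Am L2) - 2%:E * E (Am L1 `&` Am Lb).
Proof.
move=> tcut_gt0.
have := eq_sum_EZ_preimage P _ attempts Z _ _ measurable_attempts
  (Aminus_indicator_count tcut X tcut_gt0).
rewrite !big_cons !big_nil !adde0.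
rewrite (EZ_swap12_eq (Am2 L1 L2) (Am2 L2 L1)); last exact: preimage_Aminus2_swap.
rewrite (EZ_swap12_eq (Am2 L1 Lb) (Am2 L2 Lb)); last exact: preimage_Aminus2_swap.
rewrite (EZ_swap12_eq (Am2 Lb L1) (Am2 Lb L2)); last exact: preimage_Aminus2_swap.
rewrite (EZ_swap12_eq (Am2 L1 L2 `&` Am2 L1 Lb) (Am2 L2 L1 `&` Am2 L2 Lb)); last first.
  by rewrite preimage_setI !(preimage_Aminus2_swap _ X_swap12).
rewrite (EZ_swap12_eq (Am L1 `&` Am Lb) (Am L2 `&` Am Lb)); last first.
  by rewrite preimage_setI !(preimage_Aminus_swap _ X_swap12).
rewrite !EZ_EFin -!(EFinD, EFinB, EFinM) => sum_eq.
by congr EFin; have := EFin_inj sum_eq; lra.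
Qed.

Lemma EZ_failure_add_success :
  E [set t | Yof tcut X t = 0%N] + E [set t | Yof tcut X t = 1%N] =
  \int[P]_x (Z (attempts x))%:R%:E.
Proof.
have := eq_sum_EZ_preimage P _ attempts Z _ _ measurable_attempts
  (Yof_indicator_count tcut X).
by rewrite !big_cons !big_nil !adde0.
Qed.

End three_links.

Theorem mainTheorem1 (R : realType) (d : measure_display) (T : measurableType d)
  (P : probability T R)
  (tm tb tmsg tcut : nat) (pm pb : R)
  (M1 M2 Mb : T -> nat) (C : nat -> T -> nat * nat) :
  (1 <= tm)%N -> (1 <= tb)%N -> (maxn tm (maxn tb tmsg) < tcut)%N ->
  0 < pm < 1 -> 0 < pb < 1 ->
  (* M_1, M_2, M_b: measurable, independent, geometric *)
  (forall (l : link) (v : nat), measurable (Mof M1 M2 Mb l @^-1` [set v])) ->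
  mutually_independent P (Mof M1 M2 Mb) ->
  (forall j : nat, (0 < j)%N ->
     P (M1 @^-1` [set j]) = (pm * (1 - pm) ^+ j.-1)%:E /\
     P (M2 @^-1` [set j]) = (pm * (1 - pm) ^+ j.-1)%:E /\
     P (Mb @^-1` [set j]) = (pb * (1 - pb) ^+ j.-1)%:E) ->
  (* (Y^(i), Z^(i))_{i>=1} = (C 0, C 1, ...): i.i.d. copies of (Y, Z) *)
  (forall (i : nat) (v : nat * nat), measurable (C i @^-1` [set v])) ->
  mutually_independent P C ->
  (forall (i : nat) (B : set (nat * nat)),
     P (C i @^-1` B) =
     P ((fun x => (Yof tcut (Xof tm tb M1 M2 Mb) x,
                   Zof tcut tmsg (Xof tm tb M1 M2 Mb) x)) @^-1` B)) ->
  let X := Xof tm tb M1 M2 Mb in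
  let Y := Yof tcut X in
  let Z := Zof tcut tmsg X in
  let p := fine (P [set x | Y x = 1%N]) in
  let E := EZ P Z in
  let Ap := Aplus tcut X in
  let Am := Aminus tcut X in
  let Am2 := Aminus2 tcut X in
  ((\int[P]_x Xe2e C x
     = (E [set x | Y x = 0%N] + E [set x | Y x = 1%N]) * (p^-1)%:E)%E /\
   (E [set x | Y x = 1%N]
     = 2%:E * E (Ap L1) + E (Ap Lb) - E (Ap L1 `&` Ap L2)
       - 2%:E * E (Ap L1 `&` Ap Lb) + E (Ap L1 `&` Ap L2 `&` Ap Lb))%E /\
   (E [set x | Y x = 0%N]
     = 2%:E * (E (Am2 L1 L2) + E (Am2 L1 Lb) + E (Am2 Lb L1))
       - 2%:E * E (Am2 L1 L2 `&` Am2 L1 Lb) - E (Am2 Lb L1 `&` Am2 Lb L2)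
       - E (Am L1 `&` Am L2) - 2%:E * E (Am L1 `&` Am Lb))%E).
Proof.
move=> tm_ge1 tb_ge1 tcut_gt pm01 pb01 M_meas M_indep M_geom C_meas C_indep C_law
  X Y Z p E Ap Am Am2.
(* The geometric laws fix the fibres over j >= 1 only; the mass at 0 is what remains. *)
have M1_M2_law : forall v, P (M1 @^-1` [set v]) = P (M2 @^-1` [set v]).
  apply: prob_fibers_eq (M_meas L1) (M_meas L2) _ => j j0.
  by rewrite (M_geom j j0).1 (M_geom j j0).2.1.
have M1_mean := geometric_mean_fin P M1 pm (M_meas L1) pm01 (fun j j0 => (M_geom j j0).1).
have p_gt0 : 0 < p.
  have [/andP[pm0 _] /andP[pb0 _]] := (pm01, pb01).
  have [M1_1 [M2_1 Mb_1]] := M_geom 1%N isT.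
  apply: (success_prob_gt0 P tm tb tcut M1 M2 Mb M_meas M_indep); try lia;
    by rewrite ?M1_1 ?M2_1 ?Mb_1 lte_fin expr0 mulr1.
split; [|split].
- have W_meas v : measurable ((fun x => (Y x, Z x)) @^-1` [set v]).
    pose W t := (Yof tcut (Xtriple tm tb) t, Zof tcut tmsg (Xtriple tm tb) t).
    exact: (measurable_attempts M1 M2 Mb M_meas (W @^-1` [set v])).
  rewrite (Xe2e_mean P C _ p C_meas C_indep C_law W_meas
    (prob_failureE P tm tb tcut M1 M2 Mb M_meas) p_gt0
    (Z_mean_fin P tm tb tmsg tcut M1 M2 Mb M_meas M1_mean)).
  by rewrite -(EZ_failure_add_success P tm tb tmsg tcut M1 M2 Mb M_meas).
- exact: (EZ_success_incl_excl P tm tb tmsg tcut M1 M2 Mb M_meas M_indep M1_M2_law M1_mean).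
- apply: (EZ_failure_incl_excl P tm tb tmsg tcut M1 M2 Mb M_meas M_indep M1_M2_law M1_mean).
  lia.
Qed.
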